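(* Let $G$ be a connected simple graph on $n\ge2$ vertices labeled so that $m_1\ge m_2\ge\cdots\ge m_n$, where $m_i=\frac{\sum_{j\sim i}d_j}{d_i}$. Let $N=\max_{i\sim j}d_j/d_i$. Then for $1\le i\le n$, \[\rho(A(G))\le \frac{m_i-N+\sqrt{(m_i+N)^2+4N\sum_{k=1}^{i-1}(m_k-m_i)}}{2},\] and equality holds if and only if $m_1=m_2=\cdots=m_n$ (i.e., $G$ is pseudo-regular).
   Context: $A(G)$ is the adjacency matrix of $G$, $d_i$ the degree of vertex $v_i$, $i\sim j$ means $v_i$ and $v_j$ are adjacent, $m_i$ is the average degree of $v_i$, and $\rho$ is the spectral radius. A graph is pseudo-regular if all $m_i$ are equal. An empty sum equals $0$. *)

From HB Require Import structures.
From mathcomp Require Import all_boot all_order all_algebra all_field.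
Set Implicit Arguments. Unset Strict Implicit. Unset Printing Implicit Defensive.
Import Order.TTheory GRing.Theory Num.Theory.
Local Open Scope ring_scope.

Definition simple_graph n (e : rel 'I_n) : Prop :=
  symmetric e /\ irreflexive e.

Definition connected_graph n (e : rel 'I_n) : Prop :=
  forall i j : 'I_n, connect e i j.

Definition deg n (e : rel 'I_n) (i : 'I_n) : nat := #|[set j | e i j]|.

Definition avgdeg n (e : rel 'I_n) (i : 'I_n) : algC :=
  (\sum_(j | e i j) (deg e j)%:R) / (deg e i)%:R.

(* N = max_{i ~ j} d_j / d_i  (all values are positive, 0 is a neutral start) *)
Definition maxratio n (e : rel 'I_n) : algC :=
  \big[Num.max/0]_(p : 'I_n * 'I_n | e p.1 p.2) ((deg e p.2)%:R / (deg e p.1)%:R).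

Definition adjmx n (e : rel 'I_n) : 'M[algC]_n := \matrix_(i, j) (e i j)%:R.

Definition spectrum n (A : 'M[algC]_n) : seq algC :=
  projT1 (closed_field_poly_normal (char_poly A)).

Definition spectral_radius n (A : 'M[algC]_n) : algC :=
  \big[Num.max/0]_(l <- spectrum A) `|l|.

Definition pseudo_regular n (e : rel 'I_n) : Prop :=
  forall i j : 'I_n, avgdeg e i = avgdeg e j.

From mathcomp Require Import all_boot all_order all_algebra all_field.
From mathcomp Require Import ring.
Set Implicit Arguments. Unset Strict Implicit. Unset Printing Implicit Defensive.
Import Order.TTheory GRing.Theory Num.Theory.
Local Open Scope ring_scope.

(* The proof is a weighted row-sum argument.  If w is a positive weight on
   the vertices with \sum_{j~k} w_j <= l0 w_k for every vertex k, then every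
   eigenvalue of A(G) has modulus at most l0: compare the eigen equation with
   the row inequality at a vertex maximising |v_k| / w_k.  If moreover some
   eigenvalue has modulus l0 and G is connected, all row inequalities are
   equalities.  For a fixed vertex i, the bound l0 is the positive root of
   (x - m_i)(x + N) = N \sum_{k<i} (m_k - m_i), and the weight is
   w_k = d_k (1 + h_k) with h_k = (m_k - m_i)/(l0 + N) for k < i, h_k = 0
   otherwise; d_k m_k = \sum_{j~k} d_j and d_j <= N d_k along edges give the
   row inequalities.  In the equality case a vertex with h_j > 0 would be
   adjacent to all others with d_j = N d_k, forcing m_j <= m_i, which is
   absurd; so h = 0, w = d, and the row equalities say m_k = l0 for all k.
   Conversely a pseudo-regular graph has the eigenvector (d_k)_k. *)

(* Maxima \big[Num.max/0] of nonnegative values in a (partially ordered)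
   numeric domain behave as in a totally ordered one. *)
Section NonnegMax.
Variables (R : numDomainType) (I : eqType) (P : pred I) (f : I -> R).
Hypothesis f_ge0 : forall x, P x -> 0 <= f x.

Lemma bigmax_nneg_ge0 s : 0 <= \big[Num.max/0]_(x <- s | P x) f x.
Proof.
elim/big_ind: _ => [//|y z y0 z0|x /f_ge0 //].
by rewrite comparable_le_max ?y0 // real_comparable ?ger0_real.
Qed.

Lemma bigmax_nneg_lb s x : x \in s -> P x -> f x <= \big[Num.max/0]_(y <- s | P y) f y.
Proof.
move=> + Px; elim: s => [|y s IH] //; rewrite big_cons.
have cmp a : 0 <= a -> a >=< \big[Num.max/0]_(y <- s | P y) f y.
  by move=> a0; rewrite real_comparable ?ger0_real ?bigmax_nneg_ge0.
rewrite inE => /orP[/eqP <-|xs]; first by rewrite Px /= comparable_le_max ?lexx ?cmp ?f_ge0.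
by case: ifP => [Py|_]; rewrite ?comparable_le_max ?IH ?orbT ?cmp ?f_ge0.
Qed.

Lemma bigmax_nneg_ub s b : 0 <= b -> (forall x, x \in s -> P x -> f x <= b) ->
  \big[Num.max/0]_(x <- s | P x) f x <= b.
Proof.
move=> b0 fb; suff /andP[] : 0 <= \big[Num.max/0]_(x <- s | P x) f x <= b by [].
rewrite big_seq_cond; elim/big_ind: _ => [|y z /andP[y0 yb] /andP[z0 zb]|x /andP[xs Px]].
- by rewrite lexx b0.
- have yz : y >=< z by rewrite real_comparable ?ger0_real.
  by rewrite comparable_le_max // y0 comparable_ge_max // yb zb.
- by rewrite f_ge0 // fb.
Qed.

End NonnegMax.

Lemma bigmax_attained (R : numDomainType) (I : eqType) (P : pred I)
    (f : I -> R) s : 0 < \big[Num.max/0]_(x <- s | P x) f x ->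
  exists2 x, x \in s & P x /\ f x = \big[Num.max/0]_(y <- s | P y) f y.
Proof.
rewrite big_seq_cond; elim/big_ind: _ => [|y z IHy IHz|x /andP[xs Px] _].
- by rewrite ltxx.
- by rewrite maxElt; case: ifP => _; [exact: IHz | exact: IHy].
- by exists x.
Qed.

Lemma ler_sum_eq (R : numDomainType) (I : finType) (P : pred I) (F G : I -> R) :
  (forall i, P i -> F i <= G i) ->
  \sum_(i | P i) F i = \sum_(i | P i) G i -> forall i, P i -> F i = G i.
Proof.
move=> FG eqFG i Pi; apply/eqP; rewrite eq_sym -subr_eq0; apply/eqP.
have GF_ge0 j : P j -> 0 <= G j - F j by move=> Pj; rewrite subr_ge0 FG.
by rewrite (psumr_eq0P GF_ge0) // sumrB eqFG subrr.
Qed.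

Lemma mem_spectrum n (A : 'M[algC]_n) l : (l \in spectrum A) = eigenvalue A l.
Proof.
rewrite eigenvalue_root_char /spectrum; case: closed_field_poly_normal => r /= ->.
by rewrite (monicP (char_poly_monic A)) scale1r root_prod_XsubC.
Qed.

Section SpectralRadius.
Variables (n : nat) (A : 'M[algC]_n).

Lemma spectral_radius_ge l : eigenvalue A l -> `|l| <= spectral_radius A.
Proof.
by move=> Al; apply: bigmax_nneg_lb => //; rewrite mem_spectrum.
Qed.

Lemma spectral_radius_le b : 0 <= b ->
  (forall l, eigenvalue A l -> `|l| <= b) -> spectral_radius A <= b.
Proof.
by move=> b0 Ab; apply: bigmax_nneg_ub => // l; rewrite mem_spectrum => /Ab.
Qed.

Lemma spectral_radius_attained : 0 < spectral_radius A ->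
  exists2 l, eigenvalue A l & `|l| = spectral_radius A.
Proof.
case/bigmax_attained => l + [_ lE].
by rewrite mem_spectrum; exists l.
Qed.

End SpectralRadius.

Lemma adjmx_row n (e : rel 'I_n) (v : 'rV[algC]_n) k : symmetric e ->
  (v *m adjmx e) 0 k = \sum_(j | e k j) v 0 j.
Proof.
move=> se; rewrite !mxE (bigID (fun j => e k j)) /= addrC big1 ?add0r.
  by apply: eq_bigr => j ekj; rewrite mxE se ekj mulr1.
by move=> j /negbTE ekj; rewrite mxE se ekj mulr0.
Qed.

Section WeightedRowSum.
Variables (n : nat) (e : rel 'I_n) (w : 'I_n -> algC) (l0 lam : algC) (v : 'rV[algC]_n).
Hypotheses (se : symmetric e) (w_gt0 : forall k, 0 < w k).
Hypothesis row_le : forall k, \sum_(j | e k j) w j <= l0 * w k.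
Hypotheses (ev : v *m adjmx e = lam *: v) (v_neq0 : v != 0).

Let r j := `|v 0 j| / w j.
Let M := \big[Num.max/0]_j r j.

Let r_ge0 j : 0 <= r j.
Proof. by rewrite divr_ge0 // ltW. Qed.

Let normv j : `|v 0 j| = w j * r j.
Proof. by rewrite mulrC divfK // gt_eqF. Qed.

Let r_le_M j : r j <= M.
Proof. exact: bigmax_nneg_lb (fun j _ => r_ge0 j) _ _ (mem_index_enum j) _. Qed.

Let M_gt0 : 0 < M.
Proof.
rewrite lt_def bigmax_nneg_ge0 ?andbT; last by move=> j _; exact: r_ge0.
apply: contra_neq v_neq0 => M0; apply/rowP => j; rewrite mxE; apply/eqP.
by rewrite -normr_le0 normv pmulr_rle0 // -M0.
Qed.

Lemma max_vertex_chain k : r k = M ->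
  [/\ `|lam| * (w k * M) <= \sum_(j | e k j) w j * r j,
      \sum_(j | e k j) w j * r j <= \sum_(j | e k j) w j * M
    & \sum_(j | e k j) w j * M <= l0 * (w k * M)].
Proof.
move=> rk; split.
- have := congr1 (fun u : 'rV[algC]_n => u 0 k) ev.
  rewrite /= adjmx_row // mxE => evk.
  rewrite -rk -normv -normrM -evk (le_trans (ler_norm_sum _ _ _)) //.
  by apply: ler_sum => j _; rewrite normv.
- by apply: ler_sum => j _; rewrite ler_pM2l ?r_le_M.
- by rewrite -mulr_suml mulrA ler_pM2r ?row_le.
Qed.

Let max_vertex_exists : exists k, r k = M.
Proof. by have [k _ [_ rk]] := bigmax_attained M_gt0; exists k. Qed.

Lemma weighted_eig_bound : `|lam| <= l0.
Proof.
have [k rk] := max_vertex_exists; have [h1 h2 h3] := max_vertex_chain rk.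
have wM_gt0 : 0 < w k * M by rewrite mulr_gt0.
by rewrite -(ler_pM2r wM_gt0) (le_trans h1 (le_trans h2 h3)).
Qed.

Hypothesis lam_eq : `|lam| = l0.

Lemma max_vertex_tight k : r k = M ->
  (forall j, e k j -> r j = M) /\ \sum_(j | e k j) w j = l0 * w k.
Proof.
move=> rk; have [h1 h2 h3] := max_vertex_chain rk; rewrite lam_eq in h1.
have e23 : \sum_(j | e k j) w j * M = l0 * (w k * M).
  by apply/le_anti; rewrite h3 (le_trans h1 h2).
have e12 : \sum_(j | e k j) w j * r j = \sum_(j | e k j) w j * M.
  by apply/le_anti; rewrite h2 e23 h1.
split; last by apply: (mulIf (lt0r_neq0 M_gt0)); rewrite mulr_suml e23 mulrA.
move=> j ekj; apply: (mulfI (lt0r_neq0 (w_gt0 j))).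
by apply: (ler_sum_eq _ e12) ekj => i _; rewrite ler_pM2l ?r_le_M.
Qed.

Lemma weighted_eig_tight : connected_graph e ->
  forall k, \sum_(j | e k j) w j = l0 * w k.
Proof.
move=> conn k; have [k0 rk0] := max_vertex_exists.
have closed_max : closed e (fun j => r j == M).
  move=> x y exy; apply/eqP/eqP => [/max_vertex_tight[->] // | /max_vertex_tight[rM _]].
  by apply: rM; rewrite se.
have := closed_connect closed_max (conn k0 k).
by rewrite !unfold_in /= rk0 eqxx => /esym/eqP/max_vertex_tight[].
Qed.

End WeightedRowSum.

Section Degrees.
Variables (n : nat) (e : rel 'I_n).
Hypotheses (n2 : (2 <= n)%N) (se : symmetric e) (conn : connected_graph e).
Local Notation d k := ((deg e k)%:R : algC).
Local Notation m := (avgdeg e).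
Local Notation N := (maxratio e).

Lemma sum_nbr_const k (c : algC) : \sum_(j | e k j) c = c * d k.
Proof.
rewrite (eq_bigl (fun j => j \in [set j | e k j])); last by move=> j; rewrite inE.
by rewrite sumr_const mulr_natr.
Qed.

Lemma nbr_exists k : exists j, e k j.
Proof.
have [j kj] : exists j : 'I_n, k != j.
  case: n n2 k => [|[|n']] // _ k.
  by case: (k =P ord0) => [->|/eqP]; [exists ord_max | exists ord0].
have /connectP[[|x p] /= pth lst] := conn k j; first by rewrite lst eqxx in kj.
by case/andP: pth => ekx _; exists x.
Qed.

Lemma deg_gt0 k : 0 < d k.
Proof.
have [j ekj] := nbr_exists k.
by rewrite ltr0n card_gt0; apply/set0Pn; exists j; rewrite inE.
Qed.

Lemma deg_avgdeg k : d k * m k = \sum_(j | e k j) d j.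
Proof. by rewrite mulrC divfK // lt0r_neq0 ?deg_gt0. Qed.

Lemma deg_le_maxratio k j : e k j -> d j <= N * d k.
Proof.
move=> ekj; rewrite -ler_pdivrMr ?deg_gt0 //.
have ratio_ge0 (p : 'I_n * 'I_n) : e p.1 p.2 -> 0 <= d p.2 / d p.1.
  by move=> _; rewrite divr_ge0.
exact: (bigmax_nneg_lb ratio_ge0 (mem_index_enum (k, j))).
Qed.

(* Along an edge one of the two degree ratios is at least 1, so N >= 1. *)
Lemma maxratio_ge1 : 1 <= N.
Proof.
pose k : 'I_n := Ordinal (ltnW n2); have [j ekj] := nbr_exists k.
have [dkj|djk] := orP (real_leVge (realn algC (deg e k)) (realn algC (deg e j))).
- by rewrite -(ler_pM2r (deg_gt0 k)) mul1r (le_trans dkj) ?deg_le_maxratio.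
- by rewrite -(ler_pM2r (deg_gt0 j)) mul1r (le_trans djk) ?deg_le_maxratio // se.
Qed.

(* Every neighbour has degree at least 1, so m_k >= 1. *)
Lemma avgdeg_ge1 k : 1 <= m k.
Proof.
rewrite -(ler_pM2l (deg_gt0 k)) mulr1 deg_avgdeg -[X in X <= _]mul1r -sum_nbr_const.
by apply: ler_sum => j _; rewrite ler1n -(ltr0n algC) deg_gt0.
Qed.

End Degrees.

Section VertexBound.
Variables (n : nat) (e : rel 'I_n).
Hypotheses (n2 : (2 <= n)%N) (se : symmetric e) (irr : irreflexive e).
Hypothesis conn : connected_graph e.
Hypothesis m_sorted : forall i j : 'I_n, (i <= j)%N -> avgdeg e j <= avgdeg e i.
Variable i : 'I_n.
Local Notation d k := ((deg e k)%:R : algC).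
Local Notation m := (avgdeg e).
Local Notation N := (maxratio e).
Local Notation gap_sum := (\sum_(k : 'I_n | (k < i)%N) (m k - m i)).
Local Notation bound :=
  ((m i - N + sqrtC ((m i + N) ^+ 2 + 4%:R * N * gap_sum)) / 2%:R).

Let d_gt0 k : 0 < d k := deg_gt0 n2 conn k.
Let N_ge1 : 1 <= N := maxratio_ge1 n2 se conn.
Let N_gt0 : 0 < N := lt_le_trans ltr01 N_ge1.
Let m_ge1 k : 1 <= m k := avgdeg_ge1 n2 conn k.
Let mN_ge0 : 0 <= m i + N := addr_ge0 (le_trans ler01 (m_ge1 i)) (ltW N_gt0).

(* The vertices before i have larger average degree. *)
Lemma gap_sum_ge0 : 0 <= gap_sum.
Proof. by apply: sumr_ge0 => k ki; rewrite subr_ge0 m_sorted // ltnW. Qed.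

(* The bound is at least m_i since gap_sum >= 0. *)
Lemma avgdeg_le_bound : m i <= bound.
Proof.
rewrite ler_pdivlMr ?ltr0n // -subr_ge0.
have -> : m i - N + sqrtC ((m i + N) ^+ 2 + 4%:R * N * gap_sum) - m i * 2%:R =
          sqrtC ((m i + N) ^+ 2 + 4%:R * N * gap_sum) - (m i + N) by ring.
have corr_ge0 : 0 <= 4%:R * N * gap_sum.
  by rewrite mulr_ge0 ?gap_sum_ge0 // mulr_ge0 // ltW.
have sq_ge0 : 0 <= (m i + N) ^+ 2 := exprn_ge0 2 mN_ge0.
by rewrite subr_ge0 -{1}(sqrCK mN_ge0) ler_sqrtC ?nnegrE ?lerDl ?addr_ge0.
Qed.

Lemma bound_gt0 : 0 < bound.
Proof. exact: lt_le_trans ltr01 (le_trans (m_ge1 i) avgdeg_le_bound). Qed.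

Lemma bound_quadratic : (bound - m i) * (bound + N) = N * gap_sum.
Proof.
have := sqrtCK ((m i + N) ^+ 2 + 4%:R * N * gap_sum).
set s := sqrtC _ => s2.
have -> : ((m i - N + s) / 2%:R - m i) * ((m i - N + s) / 2%:R + N) =
          (s ^+ 2 - (m i + N) ^+ 2) / 4%:R by field.
by rewrite s2; field.
Qed.

Let boundN_gt0 : 0 < bound + N := addr_gt0 bound_gt0 N_gt0.

(* The weight w_k = d_k (1 + h_k) corrects the degree vector on the vertices
   before i by their excess average degree. *)
Let h (k : 'I_n) : algC := if (k < i)%N then (m k - m i) / (bound + N) else 0.
Let H := \sum_k h k.
Let w (k : 'I_n) : algC := d k * (1 + h k).

Lemma h_ge0 k : 0 <= h k.
Proof.
rewrite /h; case: ifP => // ki.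
by rewrite divr_ge0 ?subr_ge0 ?(m_sorted (ltnW ki)) // ltW.
Qed.

Lemma h_gap k : m k - m i <= (bound + N) * h k.
Proof.
rewrite /h; case: ifP => ki; first by rewrite mulrC divfK ?lt0r_neq0.
by rewrite mulr0 subr_le0 m_sorted // leqNgt ki.
Qed.

Lemma N_H : N * H = bound - m i.
Proof.
have -> : H = gap_sum / (bound + N).
  rewrite /H mulr_suml [RHS]big_mkcond /=.
  by apply: eq_bigr => k _; rewrite /h; case: ifP; rewrite ?mul0r.
by rewrite mulrA -bound_quadratic mulfK ?lt0r_neq0.
Qed.

Lemma w_gt0 k : 0 < w k.
Proof. by rewrite mulr_gt0 // (lt_le_trans ltr01) // lerDl h_ge0. Qed.

Lemma row_weight k :
  \sum_(j | e k j) w j = d k * m k + \sum_(j | e k j) d j * h j.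
Proof.
rewrite deg_avgdeg // -big_split.
by apply: eq_bigr => j _; rewrite /w mulrDr mulr1.
Qed.

Lemma nbr_h_le k : \sum_(j | e k j) d j * h j <= N * d k * \sum_(j | e k j) h j.
Proof.
rewrite mulr_sumr; apply: ler_sum => j ekj; apply: ler_wpM2r; first exact: h_ge0.
exact: deg_le_maxratio.
Qed.

Lemma split_H k :
  H - h k = \sum_(j | e k j) h j + \sum_(j | (j != k) && ~~ e k j) h j.
Proof.
rewrite /H (bigD1 k) //= addrC addrK (bigID (fun j => e k j)) /=.
congr (_ + _); apply: eq_bigl => j; case ekj: (e k j); rewrite ?andbT ?andbF //.
by apply/eqP => jk; rewrite jk irr in ekj.
Qed.

(* The quadratic equation for the bound absorbs the total correction:
   d_k m_k + N d_k (H - h_k) <= bound * w_k. *)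
Lemma row_slack k : d k * m k + N * d k * (H - h k) <= bound * w k.
Proof.
rewrite -subr_ge0.
have -> : bound * w k - (d k * m k + N * d k * (H - h k)) =
    d k * ((bound + N) * h k - (m k - m i)) + d k * (bound - m i - N * H).
  by rewrite /w; ring.
by rewrite N_H subrr mulr0 addr0 mulr_ge0 ?subr_ge0 ?h_gap // ltW.
Qed.

Lemma weight_row_le k : \sum_(j | e k j) w j <= bound * w k.
Proof.
rewrite row_weight (le_trans _ (row_slack k)) // lerD2l (le_trans (nbr_h_le k)) //.
rewrite split_H; apply: ler_wpM2l; first by rewrite mulr_ge0 // ltW.
by rewrite lerDl sumr_ge0 // => j _; exact: h_ge0.
Qed.

Lemma spectral_radius_le_bound : spectral_radius (adjmx e) <= bound.
Proof.
apply: spectral_radius_le => [|l /eigenvalueP[v ev vnz]]; first exact: ltW bound_gt0.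
exact: weighted_eig_bound se w_gt0 weight_row_le ev vnz.
Qed.

Section Tight.
Hypothesis tight : forall k, \sum_(j | e k j) w j = bound * w k.

(* Then the two inequalities used in weight_row_le are equalities: the
   neighbours j of k satisfy d_j h_j = N d_k h_j, and h vanishes off the
   closed neighbourhood of k. *)
Lemma tight_rows k :
  \sum_(j | e k j) d j * h j = N * d k * \sum_(j | e k j) h j /\
  \sum_(j | (j != k) && ~~ e k j) h j = 0.
Proof.
have Ndk_gt0 : 0 < N * d k by rewrite mulr_gt0.
have XY := nbr_h_le k.
have YZ : N * d k * \sum_(j | e k j) h j <= N * d k * (H - h k).
  by rewrite split_H ler_pM2l // lerDl sumr_ge0 // => j _; exact: h_ge0.
have ZX : N * d k * (H - h k) <= \sum_(j | e k j) d j * h j.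
  by rewrite -(lerD2l (d k * m k)) -row_weight tight row_slack.
have eYZ : N * d k * \sum_(j | e k j) h j = N * d k * (H - h k).
  by apply/le_anti; rewrite YZ (le_trans ZX XY).
split; first by apply/le_anti; rewrite XY eYZ ZX.
move/(mulfI (lt0r_neq0 Ndk_gt0))/eqP: eYZ.
by rewrite split_H -subr_eq0 opprD addrA subrr add0r oppr_eq0 => /eqP.
Qed.

Lemma tight_hub j0 : 0 < h j0 -> forall k, k != j0 -> e k j0 /\ d j0 = N * d k.
Proof.
move=> hj0 k kj0; have [nbr_eq off_eq0] := tight_rows k.
have ekj0 : e k j0.
  apply: contraT => nekj0; move: (lt0r_neq0 hj0).
  by rewrite (psumr_eq0P (fun j _ => h_ge0 j) off_eq0) ?eqxx // eq_sym kj0.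
have termwise : \sum_(j | e k j) d j * h j = \sum_(j | e k j) N * d k * h j.
  by rewrite nbr_eq mulr_sumr.
split=> //; apply: (mulIf (lt0r_neq0 hj0)).
apply: (ler_sum_eq _ termwise) ekj0 => j ekj.
by apply: ler_wpM2r; [exact: h_ge0 | exact: deg_le_maxratio].
Qed.

(* No such hub exists: it would have average degree d_i <= m_i, while
   h_{j0} > 0 means m_{j0} > m_i. *)
Lemma tight_h_eq0 j0 : h j0 = 0.
Proof.
have [// | hj0_neq0] := eqVneq (h j0) 0; exfalso.
have hj0 : 0 < h j0 by rewrite lt_def hj0_neq0 h_ge0.
have j0i : (j0 < i)%N by move: hj0_neq0; rewrite /h; case: ifP; rewrite ?eqxx.
have ij0 : i != j0 by apply: contraTneq j0i => ->; rewrite ltnn.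
have [_ dj0] := tight_hub hj0 ij0.
have d_other k : k != j0 -> d k = d i.
  by move=> kj0; apply: (mulfI (lt0r_neq0 N_gt0)); rewrite -dj0; case: (tight_hub hj0 kj0).
have mj0 : m j0 = d i.
  apply: (mulfI (lt0r_neq0 (d_gt0 j0))); rewrite deg_avgdeg // mulrC -sum_nbr_const.
  by apply: eq_bigr => k ek; rewrite d_other //; apply: contraTneq ek => ->; rewrite irr.
have mi_ge : d i <= m i.
  rewrite -(ler_pM2l (d_gt0 i)) deg_avgdeg // mulrC -sum_nbr_const.
  apply: ler_sum => j _; have [-> | jj0] := eqVneq j j0; last by rewrite d_other.
  by rewrite dj0 ler_peMl // ltW.
have : 0 < m j0 - m i.
  by move: hj0; rewrite /h j0i pmulr_lgt0 // invr_gt0.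
by rewrite subr_gt0 mj0 => /lt_le_trans/(_ mi_ge); rewrite ltxx.
Qed.

(* Hence w = d and every row equality reads m_k = bound. *)
Lemma tight_pseudo_regular : pseudo_regular e.
Proof.
suff mk k : m k = bound by move=> a b; rewrite (mk a) (mk b).
have := tight k; rewrite row_weight big1 => [|j _]; last by rewrite tight_h_eq0 mulr0.
rewrite /w tight_h_eq0 addr0 addr0 mulr1 mulrC.
exact: (mulIf (lt0r_neq0 (d_gt0 k))).
Qed.

End Tight.

Lemma bound_eq_pseudo_regular :
  spectral_radius (adjmx e) = bound -> pseudo_regular e.
Proof.
move=> rhoE; have rho_gt0 : 0 < spectral_radius (adjmx e) by rewrite rhoE bound_gt0.
have [l /eigenvalueP[v ev vnz] lE] := spectral_radius_attained rho_gt0.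
apply: tight_pseudo_regular.
exact: weighted_eig_tight se w_gt0 weight_row_le ev vnz (etrans lE rhoE) conn.
Qed.

(* For a pseudo-regular graph the degree vector is an eigenvector with
   eigenvalue m_i, and the bound collapses to m_i. *)
Lemma pseudo_regular_bound_eq :
  pseudo_regular e -> spectral_radius (adjmx e) = bound.
Proof.
move=> preg; have gap0 : gap_sum = 0 by apply: big1 => k _; rewrite (preg k i) subrr.
have bE : bound = m i.
  by rewrite gap0 mulr0 addr0 sqrCK //; field.
pose v : 'rV[algC]_n := \row_k d k.
have ev : v *m adjmx e = m i *: v.
  apply/rowP => k; rewrite adjmx_row // !mxE -(preg k i) mulrC deg_avgdeg //.
  by apply: eq_bigr => j _; rewrite mxE.
have vnz : v != 0 by apply/eqP => /rowP/(_ i)/eqP; rewrite !mxE gt_eqF ?d_gt0.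
apply/le_anti; rewrite spectral_radius_le_bound /= bE.
rewrite -{1}(ger0_norm (le_trans ler01 (m_ge1 i))) spectral_radius_ge //.
by apply/eigenvalueP; exists v.
Qed.

End VertexBound.

Theorem corollary4 (n : nat) (e : rel 'I_n) :
  (2 <= n)%N ->
  simple_graph e ->
  connected_graph e ->
  (forall i j : 'I_n, (i <= j)%N -> avgdeg e j <= avgdeg e i) ->
  forall i : 'I_n,
    let bound :=
      (avgdeg e i - maxratio e
       + sqrtC ((avgdeg e i + maxratio e) ^+ 2
                + 4%:R * maxratio e
                  * \sum_(k : 'I_n | (k < i)%N) (avgdeg e k - avgdeg e i))) / 2%:R in
    spectral_radius (adjmx e) <= bound /\
    (spectral_radius (adjmx e) = bound <-> pseudo_regular e).
Proof.
move=> n2 [se irr] conn m_sorted i bound; split.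
  exact: spectral_radius_le_bound n2 se irr conn m_sorted i.
split; first exact: bound_eq_pseudo_regular n2 se irr conn m_sorted i.
exact: pseudo_regular_bound_eq n2 se irr conn m_sorted i.
Qed.
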